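(* For every nonnegative integer $p$ and every $k\in\mathbb{Z}$, the generalized energy operators $[[\cdot]^p]_k^{+}$ and $[[\cdot]^p]_k^{-}$ are bilinear and satisfy the derivative chain rule property: for every $f\in\mathbf{S}^-(\mathbb{R})$, writing $g=[[f]^{p-1}]_k^{\pm}$ (with $g=f$ when $p=0$), so that $[[f]^p]_k^{\pm}=[g,g]_k^{\pm}$, $$\partial_t[g,g]_k^{\pm}=[g,g]_{k+1}^{\pm}+[\partial_t g,\partial_t g]_{k-1}^{\pm},$$ which the paper writes as $\partial_t[[f]^p]_k^{\pm}=[[f]^p]_{k+1}^{\pm}+[\partial_t[f]^p]_{k-1}^{\pm}$.
   Context: $\mathbf{S}^{-}(\mathbb{R})=\{f\in C^\infty(\mathbb{R}) : \sup_{t<0}|t|^k|\partial_t^j f(t)|<\infty \text{ for all } k,j\ge 0\}$. For $k\in\mathbb{Z}$, $\partial_t^k$ is the $k$-th derivative when $k\ge0$ and the $|k|$-fold iterated antiderivative $\int_{-\infty}^t$ when $k<0$. For $k\in\mathbb{Z}$, $[g,h]_k^{\pm}=\partial_t g\,\partial_t^{k-1}h\pm g\,\partial_t^k h$. The energy operators are $\Psi_k^{\pm}(f)=[f,f]_k^{\pm}=:[[f]^0]_k^{\pm}$, and the generalized energy operators are defined recursively by $[[f]^{p+1}]_k^{\pm}=\big[[[f]^{p}]_k^{\pm},[[f]^{p}]_k^{\pm}\big]_k^{\pm}$. Bilinearity is in the sense used by the paper: a map $B:\mathbf{V}\times\mathbf{V}\to\mathbf{S}^-(\mathbb{R})$ ($\mathbf{V}\subseteq\mathbf{S}^-(\mathbb{R})$)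 is bilinear if $B(v_1+v_2,w)=B(v_1,w)+B(v_2,w)$, $B(v,w_1+w_2)=B(v,w_1)+B(v,w_2)$ and $B(cv,w)=B(v,cw)=cB(v,w)$ for $c\in\mathbb{R}$; an operator of the form $f\mapsto B(f,f)$ built from such brackets (as $\Psi_k^{\pm}$ is from $[\cdot,\cdot]_k^{\pm}$) is called bilinear. *)

From Stdlib Require Import Reals ZArith.
From Coquelicot Require Import Coquelicot.
Open Scope R_scope.

Definition smooth (f : R -> R) : Prop :=
  forall (n : nat) (x : R), ex_derive (Derive_n f n) x.

Definition Sminus (f : R -> R) : Prop :=
  smooth f /\
  forall (k j : nat), exists M : R,
    forall t : R, t < 0 -> (Rabs t) ^ k * Rabs (Derive_n f j t) <= M.

Definition antider (f : R -> R) (t : R) : R :=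
  RInt_gen f (Rbar_locally m_infty) (at_point t).

Fixpoint iter_antider (n : nat) (f : R -> R) : R -> R :=
  match n with
  | O => f
  | S n' => antider (iter_antider n' f)
  end.

Definition dk (k : Z) (f : R -> R) : R -> R :=
  match k with
  | Z0 => f
  | Zpos p => Derive_n f (Pos.to_nat p)
  | Zneg p => iter_antider (Pos.to_nat p) f
  end.

Definition sgn (pm : bool) : R := if pm then 1 else -1.

Definition bracket (pm : bool) (k : Z) (g h : R -> R) : R -> R :=
  fun t => Derive g t * dk (k - 1) h t + sgn pm * (g t * dk k h t).

Fixpoint gen_energy (pm : bool) (p : nat) (k : Z) (f : R -> R) : R -> R :=
  match p with
  | O => bracket pm k f f
  | S p' => bracket pm k (gen_energy pm p' k f) (gen_energy pm p' k f)
  end.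

Definition gen_base (pm : bool) (p : nat) (k : Z) (f : R -> R) : R -> R :=
  match p with
  | O => f
  | S p' => gen_energy pm p' k f
  end.

Definition bilinear_on_Sminus (B : (R -> R) -> (R -> R) -> (R -> R)) : Prop :=
  (forall v w, Sminus v -> Sminus w -> Sminus (B v w)) /\
  (forall v1 v2 w, Sminus v1 -> Sminus v2 -> Sminus w ->
     forall t, B (fun x => v1 x + v2 x) w t = B v1 w t + B v2 w t) /\
  (forall v w1 w2, Sminus v -> Sminus w1 -> Sminus w2 ->
     forall t, B v (fun x => w1 x + w2 x) t = B v w1 t + B v w2 t) /\
  (forall (c : R) v w, Sminus v -> Sminus w ->
     forall t, B (fun x => c * v x) w t = c * B v w t /\
               B v (fun x => c * w x) t = c * B v w t).

From Stdlib Require Import Reals ZArith Lra Lia FunctionalExtensionality.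
From Coquelicot Require Import Coquelicot.
Open Scope R_scope.

(* The bracket [g,h]_k is a sum of two products of elements of S^-, and S^- is closed under
   products, derivatives and antiderivatives from -oo (a rapidly decaying function has a
   rapidly decaying primitive, namely [t |-> RInt h 0 t - L] with [L] its limit at -oo).
   This makes the bracket well defined on S^-, and bilinear since every d_t^j is linear.
   The chain rule is the product rule combined with d_t (d_t^j h) = d_t^(j+1) h and
   d_t^j (d_t h) = d_t^(j+1) h, which hold for every j in Z on S^- because the primitive
   from -oo of d_t h is h itself. *)

(** * Rapid decay at -oo and the class S^- *)

Definition rapid_decay (h : R -> R) : Prop :=
  forall k : nat, exists M : R, forall t : R, t < 0 -> Rabs t ^ k * Rabs (h t) <= M.

Lemma rapid_decay_bound_nonneg (h : R -> R) (k : nat) (M : R) :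
  (forall t, t < 0 -> Rabs t ^ k * Rabs (h t) <= M) -> 0 <= M.
Proof.
  intros HM. eapply Rle_trans; [|apply (HM (-1)); lra].
  apply Rmult_le_pos; [apply pow_le|]; apply Rabs_pos.
Qed.

Lemma pow_1_plus_le (x : R) (k : nat) : 0 <= x -> (1 + x) ^ k <= 2 ^ k * (1 + x ^ k).
Proof.
  intros Hx. induction k as [|k IH]; simpl; [lra|].
  assert (Hmix : x + x ^ k <= 1 + x * x ^ k).
  { destruct (Rle_dec x 1).
    - assert (x ^ k <= 1) by (rewrite <- (pow1 k); apply pow_incr; lra).
      assert (0 <= x ^ k) by (apply pow_le; lra). nra.
    - assert (1 <= x ^ k) by (apply pow_R1_Rle; lra). nra. }
  assert (0 <= 2 ^ k) by (apply pow_le; lra).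
  assert (0 <= (1 + x) ^ k) by (apply pow_le; lra).
  nra.
Qed.

(* Unlike [|t|^k], the weight [(1 - t)^k] is at least 1 on [t < 0], so one may divide by it. *)
Lemma rapid_decay_weighted (h : R -> R) : rapid_decay h ->
  forall k, exists M, forall t, t < 0 -> (1 - t) ^ k * Rabs (h t) <= M.
Proof.
  intros Hd k. destruct (Hd k) as [Mk HMk]. destruct (Hd 0%nat) as [M0 HM0].
  exists (2 ^ k * (M0 + Mk)). intros t Ht.
  specialize (HMk t Ht). specialize (HM0 t Ht). simpl in HM0.
  replace (1 - t) with (1 + Rabs t) by (rewrite Rabs_left; lra).
  pose proof (pow_1_plus_le (Rabs t) k (Rabs_pos t)).
  assert (0 <= 2 ^ k) by (apply pow_le; lra).
  pose proof (Rabs_pos (h t)).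
  assert (0 <= Rabs t ^ k) by (apply pow_le, Rabs_pos).
  apply Rle_trans with (2 ^ k * (1 + Rabs t ^ k) * Rabs (h t)).
  - apply Rmult_le_compat_r; assumption.
  - nra.
Qed.

Lemma rapid_decay_plus (f g : R -> R) :
  rapid_decay f -> rapid_decay g -> rapid_decay (fun x => f x + g x).
Proof.
  intros Hf Hg k. destruct (Hf k) as [M1 H1]. destruct (Hg k) as [M2 H2].
  exists (M1 + M2). intros t Ht. specialize (H1 t Ht). specialize (H2 t Ht).
  pose proof (Rabs_triang (f t) (g t)).
  assert (0 <= Rabs t ^ k) by (apply pow_le, Rabs_pos). nra.
Qed.

Lemma rapid_decay_mult (f g : R -> R) :
  rapid_decay f -> rapid_decay g -> rapid_decay (fun x => f x * g x).
Proof.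
  intros Hf Hg k. destruct (Hf k) as [M1 H1]. destruct (Hg 0%nat) as [M2 H2].
  exists (M1 * M2). intros t Ht. specialize (H1 t Ht). specialize (H2 t Ht).
  simpl in H2. rewrite Rmult_1_l in H2. rewrite Rabs_mult, <- Rmult_assoc.
  apply Rmult_le_compat; auto using Rabs_pos.
  apply Rmult_le_pos; [apply pow_le|]; apply Rabs_pos.
Qed.

Lemma rapid_decay_scal (c : R) (f : R -> R) :
  rapid_decay f -> rapid_decay (fun x => c * f x).
Proof.
  intros Hf k. destruct (Hf k) as [M HM]. exists (Rabs c * M). intros t Ht.
  rewrite Rabs_mult.
  replace (Rabs t ^ k * (Rabs c * Rabs (f t))) with (Rabs c * (Rabs t ^ k * Rabs (f t))) by ring.
  apply Rmult_le_compat_l; auto using Rabs_pos.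
Qed.

Lemma Derive_n_S_Derive (f : R -> R) (n : nat) : Derive_n f (S n) = Derive_n (Derive f) n.
Proof.
  apply functional_extensionality; intros x.
  rewrite <- Nat.add_1_r. symmetry. exact (Derive_n_comp f n 1 x).
Qed.

Lemma Sminus_ex_derive (f : R -> R) : Sminus f -> forall x, ex_derive f x.
Proof. intros [Hs _] x. exact (Hs 0%nat x). Qed.

Lemma Sminus_continuous (f : R -> R) : Sminus f -> forall x, continuous f x.
Proof. intros Hf x. apply (@ex_derive_continuous R_AbsRing R_NormedModule), Sminus_ex_derive, Hf. Qed.

Lemma Sminus_rapid_decay (f : R -> R) : Sminus f -> rapid_decay f.
Proof. intros [_ Hd] k. exact (Hd k 0%nat). Qed.

Lemma Sminus_Derive (f : R -> R) : Sminus f -> Sminus (Derive f).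
Proof.
  intros [Hs Hd]. split.
  - intros n x. rewrite <- Derive_n_S_Derive. apply Hs.
  - intros k j. rewrite <- Derive_n_S_Derive. apply Hd.
Qed.

Lemma Sminus_Derive_n (f : R -> R) (n : nat) : Sminus f -> Sminus (Derive_n f n).
Proof.
  intros Hf. induction n as [|n IH]; [exact Hf|]. apply (Sminus_Derive _ IH).
Qed.

Lemma Sminus_of_Derive (f : R -> R) :
  (forall x, ex_derive f x) -> rapid_decay f -> Sminus (Derive f) -> Sminus f.
Proof.
  intros He Hd [Hs Hd']. split.
  - intros [|n] x; [exact (He x)|]. rewrite Derive_n_S_Derive. apply Hs.
  - intros k [|j]; [exact (Hd k)|]. rewrite Derive_n_S_Derive. apply Hd'.
Qed.

Lemma Sminus_of_Derive_stable (P : (R -> R) -> Prop) :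
  (forall F, P F -> (forall x, ex_derive F x) /\ rapid_decay F /\ P (Derive F)) ->
  forall F, P F -> Sminus F.
Proof.
  intros HP.
  assert (Hn : forall n F, P F ->
            (forall x, ex_derive (Derive_n F n) x) /\ rapid_decay (Derive_n F n)).
  { induction n as [|n IH]; intros F HF.
    - destruct (HP F HF) as [H1 [H2 _]]. split; assumption.
    - rewrite Derive_n_S_Derive. apply IH, (HP F HF). }
  intros F HF. split.
  - intros n x. apply (Hn n F HF).
  - intros k j. apply (Hn j F HF).
Qed.

Lemma Derive_n_scal_fun (c : R) (f : R -> R) (n : nat) :
  Derive_n (fun x => c * f x) n = fun x => c * Derive_n f n x.
Proof. apply functional_extensionality; intros x. apply Derive_n_scal_l. Qed.

Lemma Sminus_scal (c : R) (f : R -> R) : Sminus f -> Sminus (fun x => c * f x).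
Proof.
  intros [Hs Hd]. split.
  - intros n x. rewrite Derive_n_scal_fun. apply ex_derive_scal, Hs.
  - intros k j. rewrite Derive_n_scal_fun. exact (rapid_decay_scal c _ (fun k => Hd k j) k).
Qed.

Inductive sum_of_products : (R -> R) -> Prop :=
  | sop_mult f g : Sminus f -> Sminus g -> sum_of_products (fun x => f x * g x)
  | sop_plus F G : sum_of_products F -> sum_of_products G ->
      sum_of_products (fun x => F x + G x).

Lemma sum_of_products_is_derive (F : R -> R) : sum_of_products F ->
  exists G, sum_of_products G /\ forall x, is_derive F x (G x).
Proof.
  induction 1 as [f g Hf Hg | F1 F2 _ [G1 [HG1 dF1]] _ [G2 [HG2 dF2]]].
  - exists (fun x => Derive f x * g x + f x * Derive g x). split.
    + apply sop_plus; apply sop_mult; auto using Sminus_Derive.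
    + intros x. apply (is_derive_mult f g); try (intros; apply Rmult_comm);
        apply Derive_correct, Sminus_ex_derive; assumption.
  - exists (fun x => G1 x + G2 x). split; [apply sop_plus; assumption|].
    intros x. apply (is_derive_plus F1 F2); auto.
Qed.

Lemma sum_of_products_rapid_decay (F : R -> R) : sum_of_products F -> rapid_decay F.
Proof.
  induction 1.
  - apply rapid_decay_mult; apply Sminus_rapid_decay; assumption.
  - apply rapid_decay_plus; assumption.
Qed.

Lemma Sminus_sum_of_products (F : R -> R) : sum_of_products F -> Sminus F.
Proof.
  apply Sminus_of_Derive_stable. clear F. intros F HF.
  destruct (sum_of_products_is_derive F HF) as [G [HG dF]].
  split; [|split].
  - intros x. eexists. apply dF.
  - apply sum_of_products_rapid_decay, HF.
  - replace (Derive F) with G; [assumption|].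
    apply functional_extensionality; intros x. symmetry. apply is_derive_unique, dF.
Qed.

Lemma Sminus_plus_mult (f1 g1 f2 g2 : R -> R) :
  Sminus f1 -> Sminus g1 -> Sminus f2 -> Sminus g2 ->
  Sminus (fun x => f1 x * g1 x + f2 x * g2 x).
Proof. intros. apply Sminus_sum_of_products, sop_plus; apply sop_mult; assumption. Qed.

(** * Antiderivatives from -oo *)

(* Compare with [C / (1 - s)^2], whose primitive is [C / (1 - s)]. *)
Lemma abs_RInt_le_weighted (h : R -> R) (C v u : R) :
  (forall x, continuous h x) -> v <= u -> u < 0 ->
  (forall s, v <= s <= u -> (1 - s) ^ 2 * Rabs (h s) <= C) ->
  Rabs (RInt h v u) <= C / (1 - u).
Proof.
  intros Hc Hvu Hu Hb.
  assert (HC : 0 <= C).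
  { eapply Rle_trans; [|apply (Hb u); lra].
    apply Rmult_le_pos; [apply pow_le; lra | apply Rabs_pos]. }
  assert (Hprim : is_RInt (fun s => C / (1 - s) ^ 2) v u
                    (minus (C / (1 - u)) (C / (1 - v)))).
  { apply (is_RInt_derive (fun s => C / (1 - s))); intros x Hx;
      rewrite Rmin_left in Hx by lra; rewrite Rmax_right in Hx by lra.
    - auto_derive. lra. field. lra.
    - apply (@ex_derive_continuous R_AbsRing R_NormedModule).
      auto_derive. nra. }
  assert (Hex : forall f, (forall x, continuous f x) -> ex_RInt f v u)
    by (intros f Hf; apply (@ex_RInt_continuous R_CompleteNormedModule); intros; apply Hf).
  apply Rle_trans with (RInt (fun s => C / (1 - s) ^ 2) v u).
  - eapply Rle_trans; [apply abs_RInt_le; auto|].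
    apply RInt_le; auto.
    + apply Hex. intros x. apply continuous_comp; auto using continuous_Rabs.
    + eexists; exact Hprim.
    + intros x Hx. assert (0 < (1 - x) ^ 2) by (apply pow_lt; lra).
      apply (Rmult_le_reg_l ((1 - x) ^ 2)); auto.
      replace ((1 - x) ^ 2 * (C / (1 - x) ^ 2)) with C by (field; lra).
      apply Hb; lra.
  - rewrite (is_RInt_unique _ _ _ _ Hprim). unfold minus, plus, opp; simpl.
    assert (0 <= C / (1 - v)) by (apply Rdiv_le_0_compat; lra). lra.
Qed.

Section Antiderivative.

Variable h : R -> R.
Hypothesis h_cont : forall x, continuous h x.
Hypothesis h_decay : rapid_decay h.

Lemma ex_RInt_decaying (a b : R) : ex_RInt h a b.
Proof. apply (@ex_RInt_continuous R_CompleteNormedModule); intros; apply h_cont. Qed.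

Lemma is_derive_RInt_decaying (t : R) : is_derive (RInt h 0) t (h t).
Proof.
  apply (is_derive_RInt h (RInt h 0) 0 t); auto.
  apply filter_forall. intros b. apply (RInt_correct h 0 b), ex_RInt_decaying.
Qed.

Lemma RInt_decaying_tail_bound (k : nat) :
  exists M, forall a t, a <= t -> t < 0 -> Rabs (RInt h 0 t - RInt h 0 a) <= M / (1 - t) ^ k.
Proof.
  destruct (rapid_decay_weighted h h_decay (k + 2)) as [M HM].
  exists M. intros a t Hat Ht.
  assert (HM0 : 0 <= M).
  { eapply Rle_trans; [|apply (HM t Ht)].
    apply Rmult_le_pos; [apply pow_le; lra | apply Rabs_pos]. }
  assert (Htk : 0 < (1 - t) ^ k) by (apply pow_lt; lra).
  assert (HP : RInt h 0 t - RInt h 0 a = RInt h a t).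
  { rewrite <- (RInt_Chasles h 0 a t) by apply ex_RInt_decaying.
    unfold plus; simpl. ring. }
  rewrite HP. apply Rle_trans with ((M / (1 - t) ^ k) / (1 - t)).
  - apply abs_RInt_le_weighted; auto. intros s Hs.
    specialize (HM s ltac:(lra)). rewrite pow_add in HM.
    assert ((1 - t) ^ k <= (1 - s) ^ k) by (apply pow_incr; lra).
    assert (0 <= (1 - s) ^ 2 * Rabs (h s))
      by (apply Rmult_le_pos; [apply pow_le; lra | apply Rabs_pos]).
    apply (Rmult_le_reg_l ((1 - t) ^ k)); auto.
    replace ((1 - t) ^ k * (M / (1 - t) ^ k)) with M by (field; lra). nra.
  - assert (0 <= M / (1 - t) ^ k) by (apply Rdiv_le_0_compat; auto).
    unfold Rdiv at 1. rewrite <- (Rmult_1_r (M / (1 - t) ^ k)) at 2.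
    apply Rmult_le_compat_l; auto.
    rewrite <- Rinv_1. apply Rinv_le_contravar; lra.
Qed.

Lemma RInt_decaying_cvg_m_infty :
  exists L, filterlim (RInt h 0) (Rbar_locally m_infty) (locally L).
Proof.
  destruct (RInt_decaying_tail_bound 1) as [M HM].
  assert (HM0 : 0 <= M).
  { specialize (HM (-1) (-1) ltac:(lra) ltac:(lra)).
    rewrite Rminus_eq_0, Rabs_R0 in HM. simpl in HM.
    apply (Rmult_le_reg_r (/ ((1 - -1) * 1))); [apply Rinv_0_lt_compat; lra|].
    rewrite Rmult_0_l. exact HM. }
  apply (@filterlim_locally_cauchy R R_CompleteSpace); [apply Rbar_locally_filter|].
  intros eps. pose proof (cond_pos eps) as Heps.
  assert (Hsmall : forall a t, a <= t -> t < - (M / eps) ->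
            Rabs (RInt h 0 t - RInt h 0 a) < eps).
  { intros a t Hat Ht.
    assert (0 <= M / eps) by (apply Rdiv_le_0_compat; lra).
    eapply Rle_lt_trans; [apply HM; lra|].
    rewrite pow_1. apply (Rmult_lt_reg_r (1 - t)); [lra|].
    unfold Rdiv. rewrite Rmult_assoc, Rinv_l, Rmult_1_r by lra.
    replace M with (M / eps * eps) at 1 by (field; lra). nra. }
  exists (fun x => x < - (M / eps)). split; [exists (- (M / eps)); auto|].
  intros u v Hu Hv. change (Rabs (RInt h 0 v - RInt h 0 u) < eps).
  destruct (Rle_dec u v).
  - apply Hsmall; assumption.
  - rewrite Rabs_minus_sym. apply Hsmall; lra.
Qed.

Section Limit.

Variable L : R.
Hypothesis RInt_cvg_L : filterlim (RInt h 0) (Rbar_locally m_infty) (locally L).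

Lemma is_RInt_gen_m_infty (t : R) :
  is_RInt_gen h (Rbar_locally m_infty) (at_point t) (RInt h 0 t - L).
Proof.
  assert (Hder : forall x, Derive (RInt h 0) x = h x)
    by (intros x; apply is_derive_unique, is_derive_RInt_decaying).
  apply (is_RInt_gen_ext (Derive (RInt h 0))).
  - apply filter_forall. intros ab x _. apply Hder.
  - apply is_RInt_gen_Derive.
    + apply filter_forall. intros ab x _. eexists; apply is_derive_RInt_decaying.
    + apply filter_forall. intros ab x _.
      apply (continuous_ext h); [intros; symmetry; apply Hder | apply h_cont].
    + exact RInt_cvg_L.
    + intros Q HQ. apply locally_singleton in HQ. exact HQ.
Qed.

Lemma rapid_decay_RInt_sub_limit : rapid_decay (fun t => RInt h 0 t - L).
Proof.
  intros k. destruct (RInt_decaying_tail_bound k) as [M HM].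
  exists M. intros t Ht.
  assert (Htk : 0 < (1 - t) ^ k) by (apply pow_lt; lra).
  assert (Hlim : Rabs (RInt h 0 t - L) <= M / (1 - t) ^ k).
  { apply Rle_plus_epsilon. intros eps Heps.
    destruct (proj1 (filterlim_locally _ L) RInt_cvg_L (mkposreal eps Heps)) as [N HN].
    set (a := Rmin t N - 1).
    assert (Hat : a <= t) by (unfold a; pose proof (Rmin_l t N); lra).
    assert (HaN : a < N) by (unfold a; pose proof (Rmin_r t N); lra).
    specialize (HN a HaN). change (Rabs (RInt h 0 a - L) < eps) in HN.
    specialize (HM a t Hat Ht).
    replace (RInt h 0 t - L) with ((RInt h 0 t - RInt h 0 a) + (RInt h 0 a - L)) by ring.
    eapply Rle_trans; [apply Rabs_triang|]. lra. }
  assert (Rabs t ^ k <= (1 - t) ^ k)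
    by (apply pow_incr; split; [apply Rabs_pos | rewrite Rabs_left; lra]).
  apply Rle_trans with ((1 - t) ^ k * (M / (1 - t) ^ k)).
  - apply Rmult_le_compat; auto using Rabs_pos. apply pow_le, Rabs_pos.
  - right. field. lra.
Qed.

End Limit.

End Antiderivative.

Lemma antider_Sminus_eq (h : R -> R) : Sminus h ->
  exists L, filterlim (RInt h 0) (Rbar_locally m_infty) (locally L) /\
            antider h = fun t => RInt h 0 t - L.
Proof.
  intros Hh.
  pose proof (Sminus_continuous h Hh) as Hc. pose proof (Sminus_rapid_decay h Hh) as Hd.
  destruct (RInt_decaying_cvg_m_infty h Hc Hd) as [L HL].
  exists L. split; [exact HL|].
  apply functional_extensionality; intros t. unfold antider.
  apply is_RInt_gen_unique, is_RInt_gen_m_infty; assumption.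
Qed.

Lemma is_RInt_gen_antider (h : R -> R) (t : R) : Sminus h ->
  is_RInt_gen h (Rbar_locally m_infty) (at_point t) (antider h t).
Proof.
  intros Hh. destruct (antider_Sminus_eq h Hh) as [L [HL ->]].
  apply is_RInt_gen_m_infty; auto using Sminus_continuous, Sminus_rapid_decay.
Qed.

Lemma is_derive_antider (h : R -> R) (t : R) : Sminus h -> is_derive (antider h) t (h t).
Proof.
  intros Hh. destruct (antider_Sminus_eq h Hh) as [L [_ ->]].
  replace (h t) with (h t - 0) by ring.
  apply (is_derive_minus (RInt h 0) (fun _ => L)); [|apply (@is_derive_const R_AbsRing)].
  apply is_derive_RInt_decaying; auto using Sminus_continuous, Sminus_rapid_decay.
Qed.

Lemma Sminus_antider (h : R -> R) : Sminus h -> Sminus (antider h).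
Proof.
  intros Hh.
  assert (Hder : Derive (antider h) = h).
  { apply functional_extensionality; intros x. apply is_derive_unique, is_derive_antider, Hh. }
  apply Sminus_of_Derive; [intros x; eexists; apply is_derive_antider, Hh| |rewrite Hder; exact Hh].
  destruct (antider_Sminus_eq h Hh) as [L [HL ->]].
  apply rapid_decay_RInt_sub_limit; auto using Sminus_continuous, Sminus_rapid_decay.
Qed.

Lemma rapid_decay_cvg_m_infty (f : R -> R) :
  rapid_decay f -> filterlim f (Rbar_locally m_infty) (locally 0).
Proof.
  intros Hd. destruct (Hd 1%nat) as [M HM].
  assert (HM0 := rapid_decay_bound_nonneg f 1 M HM).
  apply filterlim_locally. intros eps. pose proof (cond_pos eps).
  assert (0 <= M / eps) by (apply Rdiv_le_0_compat; lra).
  exists (- (M / eps) - 1). intros x Hx. change (Rabs (f x - 0) < eps).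
  specialize (HM x ltac:(lra)). rewrite pow_1, Rabs_left in HM by lra.
  rewrite Rminus_0_r. apply (Rmult_lt_reg_l (- x)); [lra|].
  replace M with (M / eps * eps) in HM by (field; lra). nra.
Qed.

Lemma antider_Derive (g : R -> R) : Sminus g -> antider (Derive g) = g.
Proof.
  intros Hg. apply functional_extensionality; intros t. unfold antider.
  apply is_RInt_gen_unique. replace (g t) with (g t - 0) by ring.
  apply is_RInt_gen_Derive.
  - apply filter_forall. intros. apply Sminus_ex_derive, Hg.
  - apply filter_forall. intros. apply Sminus_continuous, Sminus_Derive, Hg.
  - apply rapid_decay_cvg_m_infty, Sminus_rapid_decay, Hg.
  - intros Q HQ. apply locally_singleton in HQ. exact HQ.
Qed.

Lemma antider_plus (f g : R -> R) : Sminus f -> Sminus g ->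
  antider (fun x => f x + g x) = fun x => antider f x + antider g x.
Proof.
  intros Hf Hg. apply functional_extensionality; intros t. unfold antider at 1.
  apply is_RInt_gen_unique, (is_RInt_gen_plus f g); apply is_RInt_gen_antider; assumption.
Qed.

Lemma antider_scal (c : R) (f : R -> R) : Sminus f ->
  antider (fun x => c * f x) = fun x => c * antider f x.
Proof.
  intros Hf. apply functional_extensionality; intros t. unfold antider at 1.
  apply is_RInt_gen_unique, (is_RInt_gen_scal f c), is_RInt_gen_antider, Hf.
Qed.

(** * The operators d_t^k and the brackets *)

Lemma Sminus_iter_antider (n : nat) (h : R -> R) : Sminus h -> Sminus (iter_antider n h).
Proof. intros Hh. induction n as [|n IH]; [exact Hh|]. apply Sminus_antider, IH. Qed.

Lemma iter_antider_S_Derive (n : nat) (g : R -> R) :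
  Sminus g -> iter_antider (S n) (Derive g) = iter_antider n g.
Proof.
  intros Hg. induction n as [|n IH]; [apply antider_Derive, Hg|].
  change (antider (iter_antider (S n) (Derive g)) = antider (iter_antider n g)).
  rewrite IH. reflexivity.
Qed.

Lemma iter_antider_plus (n : nat) (f g : R -> R) : Sminus f -> Sminus g ->
  iter_antider n (fun x => f x + g x) = fun x => iter_antider n f x + iter_antider n g x.
Proof.
  intros Hf Hg. induction n as [|n IH]; [reflexivity|].
  simpl. rewrite IH. apply antider_plus; apply Sminus_iter_antider; assumption.
Qed.

Lemma iter_antider_scal (n : nat) (c : R) (f : R -> R) : Sminus f ->
  iter_antider n (fun x => c * f x) = fun x => c * iter_antider n f x.
Proof.
  intros Hf. induction n as [|n IH]; [reflexivity|].
  simpl. rewrite IH. apply antider_scal, Sminus_iter_antider, Hf.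
Qed.

Lemma Derive_n_plus_fun (n : nat) (f g : R -> R) : Sminus f -> Sminus g ->
  Derive_n (fun x => f x + g x) n = fun x => Derive_n f n x + Derive_n g n x.
Proof.
  intros [Hf _] [Hg _]. apply functional_extensionality; intros x.
  apply Derive_n_plus; apply filter_forall; intros y [|k] _; [exact I | apply Hf | exact I | apply Hg].
Qed.

Lemma dk_of_nat (k : nat) (g : R -> R) : dk (Z.of_nat k) g = Derive_n g k.
Proof. destruct k; [reflexivity|]. simpl. rewrite SuccNat2Pos.id_succ. reflexivity. Qed.

Lemma dk_opp_of_nat (k : nat) (g : R -> R) : dk (- Z.of_nat k) g = iter_antider k g.
Proof. destruct k; [reflexivity|]. simpl. rewrite SuccNat2Pos.id_succ. reflexivity. Qed.

Lemma Z_of_nat_or_opp_succ (k : Z) :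
  (exists n, k = Z.of_nat n) \/ (exists n, k = (- Z.of_nat (S n))%Z).
Proof.
  destruct (Z_le_gt_dec 0 k).
  - left. exists (Z.to_nat k). rewrite Z2Nat.id; lia.
  - right. exists (Z.to_nat (- k - 1)). rewrite Nat2Z.inj_succ, Z2Nat.id; lia.
Qed.

Lemma Sminus_dk (k : Z) (h : R -> R) : Sminus h -> Sminus (dk k h).
Proof. intros Hh. destruct k; simpl; auto using Sminus_Derive_n, Sminus_iter_antider. Qed.

Lemma dk_plus (k : Z) (f g : R -> R) : Sminus f -> Sminus g ->
  dk k (fun x => f x + g x) = fun x => dk k f x + dk k g x.
Proof.
  intros Hf Hg. destruct k; simpl;
    [reflexivity | apply Derive_n_plus_fun | apply iter_antider_plus]; assumption.
Qed.

Lemma dk_scal (k : Z) (c : R) (f : R -> R) : Sminus f ->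
  dk k (fun x => c * f x) = fun x => c * dk k f x.
Proof.
  intros Hf. destruct k; simpl;
    [reflexivity | apply Derive_n_scal_fun | apply iter_antider_scal, Hf].
Qed.

Lemma is_derive_dk (k : Z) (g : R -> R) (t : R) :
  Sminus g -> is_derive (dk k g) t (dk (k + 1) g t).
Proof.
  intros Hg. destruct (Z_of_nat_or_opp_succ k) as [[n ->]|[n ->]].
  - replace (Z.of_nat n + 1)%Z with (Z.of_nat (S n)) by lia.
    rewrite !dk_of_nat. apply Derive_correct, (proj1 Hg).
  - replace (- Z.of_nat (S n) + 1)%Z with (- Z.of_nat n)%Z by lia.
    rewrite !dk_opp_of_nat. apply is_derive_antider, Sminus_iter_antider, Hg.
Qed.

Lemma dk_Derive (k : Z) (g : R -> R) : Sminus g -> dk k (Derive g) = dk (k + 1) g.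
Proof.
  intros Hg. destruct (Z_of_nat_or_opp_succ k) as [[n ->]|[n ->]].
  - replace (Z.of_nat n + 1)%Z with (Z.of_nat (S n)) by lia.
    rewrite !dk_of_nat. symmetry. apply Derive_n_S_Derive.
  - replace (- Z.of_nat (S n) + 1)%Z with (- Z.of_nat n)%Z by lia.
    rewrite !dk_opp_of_nat. apply iter_antider_S_Derive, Hg.
Qed.

Lemma Sminus_bracket (pm : bool) (k : Z) (v w : R -> R) :
  Sminus v -> Sminus w -> Sminus (bracket pm k v w).
Proof.
  intros Hv Hw.
  replace (bracket pm k v w) with
    (fun t => Derive v t * dk (k - 1) w t + (sgn pm * v t) * dk k w t).
  - apply Sminus_plus_mult;
      [apply Sminus_Derive | apply Sminus_dk | apply Sminus_scal | apply Sminus_dk]; assumption.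
  - apply functional_extensionality; intros t. unfold bracket. ring.
Qed.

Lemma bracket_bilinear (pm : bool) (k : Z) : bilinear_on_Sminus (bracket pm k).
Proof.
  split; [|split; [|split]].
  - apply Sminus_bracket.
  - intros v1 v2 w H1 H2 Hw t. unfold bracket.
    rewrite Derive_plus by (apply Sminus_ex_derive; assumption). ring.
  - intros v w1 w2 Hv H1 H2 t. unfold bracket. rewrite !dk_plus by assumption. ring.
  - intros c v w Hv Hw t. unfold bracket. split.
    + rewrite Derive_scal. ring.
    + rewrite !dk_scal by assumption. ring.
Qed.

(* Product rule on both terms, then [d_t^j (Derive h) = d_t^(j+1) h] regroups the four terms. *)
Lemma is_derive_bracket (pm : bool) (k : Z) (g h : R -> R) (t : R) :
  Sminus g -> Sminus h ->
  is_derive (bracket pm k g h) t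
    (bracket pm (k + 1) g h t + bracket pm (k - 1) (Derive g) (Derive h) t).
Proof.
  intros Hg Hh.
  assert (HD : is_derive (bracket pm k g h) t
    (Derive (Derive g) t * dk (k - 1) h t + Derive g t * dk k h t
     + sgn pm * (Derive g t * dk k h t + g t * dk (k + 1) h t))).
  { unfold bracket.
    apply (is_derive_plus (fun t => Derive g t * dk (k - 1) h t)
                          (fun t => sgn pm * (g t * dk k h t))).
    - apply (is_derive_mult (Derive g) (dk (k - 1) h)); [| |intros; apply Rmult_comm].
      + apply Derive_correct, Sminus_ex_derive, Sminus_Derive, Hg.
      + replace k with ((k - 1) + 1)%Z at 2 by ring. apply is_derive_dk, Hh.
    - apply (is_derive_scal (fun t => g t * dk k h t)).
      apply (is_derive_mult g (dk k h)); [| |intros; apply Rmult_comm].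
      + apply Derive_correct, Sminus_ex_derive, Hg.
      + apply is_derive_dk, Hh. }
  replace (bracket pm (k + 1) g h t + bracket pm (k - 1) (Derive g) (Derive h) t)
    with (Derive (Derive g) t * dk (k - 1) h t + Derive g t * dk k h t
          + sgn pm * (Derive g t * dk k h t + g t * dk (k + 1) h t)); [exact HD|].
  unfold bracket. rewrite !dk_Derive by assumption.
  replace (k - 1 - 1 + 1)%Z with (k - 1)%Z by ring.
  replace (k - 1 + 1)%Z with k by ring.
  replace (k + 1 - 1)%Z with k by ring.
  ring.
Qed.

Lemma Sminus_gen_energy (pm : bool) (p : nat) (k : Z) (f : R -> R) :
  Sminus f -> Sminus (gen_energy pm p k f).
Proof. intros Hf. induction p as [|p IH]; simpl; apply Sminus_bracket; assumption. Qed.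

Lemma Sminus_gen_base (pm : bool) (p : nat) (k : Z) (f : R -> R) :
  Sminus f -> Sminus (gen_base pm p k f).
Proof. intros Hf. destruct p; [exact Hf | apply Sminus_gen_energy, Hf]. Qed.

Lemma gen_energy_bracket_base (pm : bool) (p : nat) (k : Z) (f : R -> R) :
  gen_energy pm p k f = bracket pm k (gen_base pm p k f) (gen_base pm p k f).
Proof. destruct p; reflexivity. Qed.

Theorem proposition3 :
  forall (pm : bool) (p : nat) (k : Z),
    bilinear_on_Sminus (bracket pm k) /\
    (forall f, Sminus f ->
       Sminus (gen_energy pm p k f) /\
       (forall t, gen_energy pm p k f t =
                  bracket pm k (gen_base pm p k f) (gen_base pm p k f) t)) /\
    (forall f, Sminus f ->
       let g := gen_base pm p k f in
       forall t,
         ex_derive (bracket pm k g g) t /\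
         Derive (bracket pm k g g) t =
           bracket pm (k + 1) g g t + bracket pm (k - 1) (Derive g) (Derive g) t).
Proof.
  intros pm p k.
  split; [apply bracket_bilinear | split].
  - intros f Hf. split; [apply Sminus_gen_energy, Hf|].
    intros t. rewrite gen_energy_bracket_base. reflexivity.
  - intros f Hf g t.
    pose proof (Sminus_gen_base pm p k f Hf) as Hg.
    pose proof (is_derive_bracket pm k g g t Hg Hg) as HD.
    split; [eexists; exact HD | exact (is_derive_unique _ _ _ HD)].
Qed.
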